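(* Let $\mathcal D=(A,D)$ be a dependence alphabet and $\mathcal P=(Q,\Delta)$ a pushdown system satisfying (P1): $D(w)\subseteq D(a)$ for every $(p,a,w,q)\in\Delta$. Then the following are equivalent: (P2') for all $(p,a,v,q),(q,b,w,r)\in\Delta$ with $av\parallel bw$, there is a state $q'\in Q$ with $(p,b,w,q'),(q',a,v,r)\in\Delta$; (P2) for all $(p,a,v,q),(q,b,w,r)\in\Delta$ with $a\parallel b$, there is a state $q'\in Q$ with $(p,b,w,q'),(q',a,v,r)\in\Delta$.
   Context: A dependence alphabet is $\mathcal D=(A,D)$, $A$ finite, $D\subseteq A\times A$ reflexive and symmetric. For $a\in A$, $D(a)=\{c\mid(a,c)\in D\}$; for a word $w$, $D(w)$ is the union of $D(c)$ over the letters $c$ of $w$. Letters $x,y$ are independent if $(x,y)\notin D$; for words $u,v$ write $u\parallel v$ if every letter occurring in $u$ is independent of every letter occurring in $v$. A pushdown system is a pair $(Q,\Delta)$ with $Q$ a finite set of states and $\Delta\subseteq Q\times A\times A^*\times Q$ a finite set of transitions. *)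

From mathcomp Require Import all_boot.
Set Implicit Arguments. Unset Strict Implicit. Unset Printing Implicit Defensive.

Definition dep_alphabet (A : finType) (D : rel A) : Prop :=
  reflexive D /\ symmetric D.

Definition Dset (A : finType) (D : rel A) (a : A) : {set A} := [set c | D a c].

Definition Dword (A : finType) (D : rel A) (w : seq A) : {set A} :=
  \bigcup_(c <- w) Dset D c.

Definition indep (A : finType) (D : rel A) (x y : A) : bool := ~~ D x y.

Definition par (A : finType) (D : rel A) (u v : seq A) : bool :=
  all (fun x => all (fun y => indep D x y) v) u.

(* A pushdown system: finite state set Q and finite set of transitions
   (p, a, w, q), represented by a finite list. *)
Definition transition (Q A : Type) : Type := (Q * A * seq A * Q)%type.

Definition P1 (Q A : finType) (D : rel A) (Delta : seq (transition Q A)) : Prop :=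
  forall p a w q, (p, a, w, q) \in Delta -> Dword D w \subset Dset D a.

Definition P2' (Q A : finType) (D : rel A) (Delta : seq (transition Q A)) : Prop :=
  forall p a v q b w r, (p, a, v, q) \in Delta -> (q, b, w, r) \in Delta ->
    par D (a :: v) (b :: w) ->
    exists q' : Q, (p, b, w, q') \in Delta /\ (q', a, v, r) \in Delta.

Definition P2 (Q A : finType) (D : rel A) (Delta : seq (transition Q A)) : Prop :=
  forall p a v q b w r, (p, a, v, q) \in Delta -> (q, b, w, r) \in Delta ->
    par D [:: a] [:: b] ->
    exists q' : Q, (p, b, w, q') \in Delta /\ (q', a, v, r) \in Delta.

From mathcomp Require Import all_boot.
Set Implicit Arguments. Unset Strict Implicit. Unset Printing Implicit Defensive.

(* (P2) is the special case of (P2') read off the first letters.  Conversely,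
   (P1) says that every letter dependent on some letter of [v] is already
   dependent on [a].  Applied to [av], and (using symmetry of D) to [bw], this
   lets [a || b] propagate to [a || w] and then to [v || bw], i.e. to
   [av || bw], so (P2') applies. *)

Section Independence.

Variables (A : finType) (D : rel A).

Lemma mem_Dword (w : seq A) x y : x \in w -> D x y -> y \in Dword D w.
Proof.
by move=> xw Dxy; rewrite /Dword bigcup_seq; apply/bigcupP; exists x; rewrite ?inE.
Qed.

Lemma par_consl x (u v : seq A) : par D (x :: u) v = par D [:: x] v && par D u v.
Proof. by rewrite /par /= andbT. Qed.

Lemma par_consr (u : seq A) y v : par D u (y :: v) = par D u [:: y] && par D u v.
Proof. by rewrite /par -all_predI; apply: eq_all => x /=; rewrite andbT. Qed.

Lemma par_sym : symmetric D -> forall u v : seq A, par D u v = par D v u.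
Proof.
move=> Dsym u v; apply/allP/allP => uv x xv; apply/allP => y yu;
  by have /allP/(_ x xv) := uv y yu; rewrite /indep Dsym.
Qed.

Lemma par_Dword_subset a (v u : seq A) :
  Dword D v \subset Dset D a -> par D [:: a] u -> par D v u.
Proof.
move=> sub_va /andP[/allP au _]; apply/allP => x xv; apply/allP => y yu.
apply: contraNN (au y yu) => Dxy.
by have := subsetP sub_va y (mem_Dword xv Dxy); rewrite inE.
Qed.

End Independence.

Lemma P1_par_cons (A Q : finType) (D : rel A) (Delta : seq (transition Q A))
    p a v q b w r :
  symmetric D -> P1 D Delta -> (p, a, v, q) \in Delta -> (q, b, w, r) \in Delta ->
  par D [:: a] [:: b] -> par D (a :: v) (b :: w).
Proof.
move=> Dsym HP1 avD bwD ab.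
have aw : par D [:: a] w.
  by rewrite par_sym //; apply: par_Dword_subset (HP1 _ _ _ _ bwD) _; rewrite par_sym.
have abw : par D [:: a] (b :: w) by rewrite par_consr ab.
by rewrite par_consl abw (par_Dword_subset (HP1 _ _ _ _ avD) abw).
Qed.

Theorem lemma3p5 (A : finType) (D : rel A) (Q : finType)
    (Delta : seq (Q * A * seq A * Q)) :
  dep_alphabet D -> P1 D Delta -> (P2' D Delta <-> P2 D Delta).
Proof.
move=> [_ Dsym] HP1; split=> HP2 p a v q b w r avD bwD ab.
- exact: HP2 avD bwD (P1_par_cons Dsym HP1 avD bwD ab).
- by apply: HP2 avD bwD _; move: ab; rewrite par_consl par_consr => /andP[/andP[]].
Qed.
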